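(* Let $\psi\in \mathcal{F}$. Then for $i=1,2,\dots,I$, $\phi_i\in\mathcal{C}^\uparrow$.
   Context: Fix $I\in\mathbb{N}$. $\mathcal{C}=\{f\in C(\mathbb{R}_+,\mathbb{R}_+):f(0)=0,f\text{ non-decreasing}\}$, $\mathcal{C}^\uparrow=\{f\in\mathcal{C}:f\text{ strictly increasing},\lim_{u\to\infty}f(u)=\infty\}$. For $\psi=(\psi_i)_{i=1}^I\in\mathcal{C}^I$, $\phi_i(u):=u-\sum_{j=1}^I2(i\wedge j)\psi_j(u)$. $\mathcal{F}:=\{\psi\in\mathcal{C}^I:\phi_I\in\mathcal{C}^\uparrow\}$. *)

(* concrete classical reals R. Functions on R_+ = [0,oo) are
   represented as f : R -> R, with all properties required only on [0,oo). *)
From Stdlib Require Import Reals.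
Open Scope R_scope.

Fixpoint sum1 (n : nat) (f : nat -> R) : R :=
  match n with
  | O => 0
  | S m => sum1 m f + f (S m)
  end.

Definition cont_Rplus (f : R -> R) : Prop :=
  forall x, 0 <= x -> limit1_in f (fun y => 0 <= y) (f x) x.

Definition inC (f : R -> R) : Prop :=
  cont_Rplus f /\
  (forall u, 0 <= u -> 0 <= f u) /\
  f 0 = 0 /\
  (forall u v, 0 <= u -> u <= v -> f u <= f v).

Definition inCup (f : R -> R) : Prop :=
  inC f /\
  (forall u v, 0 <= u -> u < v -> f u < f v) /\
  (forall M, exists U, forall u, U <= u -> 0 <= u -> M <= f u).

(* phi_i(u) = u - sum_{j=1}^I 2 (i /\ j) psi_j(u); psi is indexed by 1..I *)
Definition phi (I : nat) (psi : nat -> R -> R) (i : nat) (u : R) : R :=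
  u - sum1 I (fun j => 2 * INR (Nat.min i j) * psi j u).

Definition inF (I : nat) (psi : nat -> R -> R) : Prop :=
  (forall j, (1 <= j <= I)%nat -> inC (psi j)) /\ inCup (phi I psi I).

(* For i <= I the weights satisfy i /\ j <= I /\ j, so
   phi_i = phi_I + sum_j 2 ((I /\ j) - (i /\ j)) psi_j
   is phi_I plus a nonnegative combination of functions of C.  Adding a
   function of C to a function of C^uparrow keeps it in C^uparrow. *)
From Stdlib Require Import Reals Lra Lia FunctionalExtensionality.
Open Scope R_scope.

Lemma sum1_le n (a b : nat -> R) :
  (forall j, (1 <= j <= n)%nat -> a j <= b j) -> sum1 n a <= sum1 n b.
Proof.
  induction n as [|n IH]; simpl; intros Hab; [lra|].
  assert (sum1 n a <= sum1 n b) by (apply IH; intros; apply Hab; lia).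
  assert (a (S n) <= b (S n)) by (apply Hab; lia).
  lra.
Qed.

Lemma sum1_ext n (a b : nat -> R) :
  (forall j, (1 <= j <= n)%nat -> a j = b j) -> sum1 n a = sum1 n b.
Proof.
  intros Hab; apply Rle_antisym; apply sum1_le; intros j Hj; rewrite (Hab j Hj); lra.
Qed.

Lemma sum1_sub n (a b : nat -> R) :
  sum1 n (fun j => a j - b j) = sum1 n a - sum1 n b.
Proof. induction n as [|n IH]; simpl; [|rewrite IH]; ring. Qed.

Lemma sum1_0 n : sum1 n (fun _ => 0) = 0.
Proof. induction n as [|n IH]; simpl; [|rewrite IH]; ring. Qed.

Lemma limit1_in_sum1 n (f : nat -> R -> R) D x :
  (forall j, (1 <= j <= n)%nat -> limit1_in (f j) D (f j x) x) ->
  limit1_in (fun u => sum1 n (fun j => f j u)) D (sum1 n (fun j => f j x)) x.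
Proof.
  induction n as [|n IH]; simpl; intros Hf.
  - exact (limit_free (fun _ => 0) D 0 x).
  - apply limit_plus; [apply IH; intros; apply Hf | apply Hf]; lia.
Qed.

Lemma inC_sum1_scale n (c : nat -> R) (f : nat -> R -> R) :
  (forall j, (1 <= j <= n)%nat -> 0 <= c j /\ inC (f j)) ->
  inC (fun u => sum1 n (fun j => c j * f j u)).
Proof.
  intros Hf.
  assert (Hmono : forall u v, 0 <= u -> u <= v ->
            sum1 n (fun j => c j * f j u) <= sum1 n (fun j => c j * f j v)).
  { intros u v Hu Huv; apply sum1_le; intros j Hj.
    destruct (Hf j Hj) as [Hc [_ [_ [_ Hfmono]]]].
    apply Rmult_le_compat_l; auto. }
  assert (Hzero : sum1 n (fun j => c j * f j 0) = 0).
  { transitivity (sum1 n (fun _ => 0)); [apply sum1_ext; intros j Hj | apply sum1_0].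
    destruct (Hf j Hj) as [_ [_ [_ [Hf0 _]]]]; rewrite Hf0; ring. }
  split; [|split; [|split]].
  - intros x Hx; apply (limit1_in_sum1 n (fun j u => c j * f j u)); intros j Hj.
    destruct (Hf j Hj) as [_ [Hcont _]].
    apply limit_mul; [exact (limit_free (fun _ => c j) _ x x) | apply Hcont; exact Hx].
  - intros u Hu; rewrite <- Hzero; apply Hmono; lra.
  - exact Hzero.
  - exact Hmono.
Qed.

Lemma inCup_add_inC (f g : R -> R) :
  inCup f -> inC g -> inCup (fun u => f u + g u).
Proof.
  intros [[Hfc [Hfpos [Hf0 Hfmono]]] [Hfstr Hfunb]] [Hgc [Hgpos [Hg0 Hgmono]]].
  split; [split; [|split; [|split]]|split].
  - intros x Hx; apply limit_plus; auto.
  - intros u Hu; pose proof (Hfpos u Hu); pose proof (Hgpos u Hu); lra.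
  - rewrite Hf0, Hg0; ring.
  - intros u v Hu Huv; pose proof (Hfmono u v Hu Huv); pose proof (Hgmono u v Hu Huv); lra.
  - intros u v Hu Huv.
    pose proof (Hfstr u v Hu Huv); pose proof (Hgmono u v Hu (Rlt_le _ _ Huv)); lra.
  - intros M; destruct (Hfunb M) as [U HU]; exists U; intros u HUu Hu.
    pose proof (HU u HUu Hu); pose proof (Hgpos u Hu); lra.
Qed.

Lemma phi_split I psi i u :
  phi I psi i u =
  phi I psi I u + sum1 I (fun j => 2 * (INR (Nat.min I j) - INR (Nat.min i j)) * psi j u).
Proof.
  unfold phi.
  rewrite (sum1_ext I (fun j => 2 * (INR (Nat.min I j) - INR (Nat.min i j)) * psi j u)
                      (fun j => 2 * INR (Nat.min I j) * psi j u
                                 - 2 * INR (Nat.min i j) * psi j u))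
    by (intros; ring).
  rewrite sum1_sub; ring.
Qed.

Theorem lemma3p1 (I : nat) (psi : nat -> R -> R) :
  inF I psi -> forall i : nat, (1 <= i <= I)%nat -> inCup (phi I psi i).
Proof.
  intros [HpsiC HphiI] i Hi.
  replace (phi I psi i) with
    (fun u => phi I psi I u
              + sum1 I (fun j => 2 * (INR (Nat.min I j) - INR (Nat.min i j)) * psi j u))
    by (extensionality u; symmetry; apply phi_split).
  apply inCup_add_inC; [exact HphiI|].
  apply inC_sum1_scale; intros j Hj; split; [|apply HpsiC; exact Hj].
  assert (Hmin : (Nat.min i j <= Nat.min I j)%nat) by lia.
  apply le_INR in Hmin; lra.
Qed.
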